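(* \begin{enumerate} \item The element $\{1\}$ is a cancellative prime element of $\mathcal P_{\mathrm{fin}}(\mathbb N_0)$, and $\mathcal P_{\mathrm{fin}}(\mathbb N_0)=F\times\mathcal P_{\mathrm{fin},0}(\mathbb N_0)$, where $F$ is the free abelian monoid generated by $\{1\}$. Moreover, $\mathcal P_{\mathrm{fin}}(\mathbb N_0)$ is fully elastic. \item Let $R=D[X_1,\dots,X_n]$ be the polynomial ring in $n\ge2$ indeterminates over a domain $D$ such that $\mathcal I(R)$ is a BF-monoid. Then $\mathcal P_{\mathrm{fin}}(\mathbb N_0)$ is isomorphic to a submonoid of $\mathcal I(R)$. \end{enumerate}
   Context: $\mathcal P_{\mathrm{fin}}(\mathbb N_0)$ (the power monoid) is the set of finite nonempty subsets of $\mathbb N_0$ with set addition $A+B=\{a+b:a\in A,b\in B\}$ as operation (identity $\{0\}$); $\mathcal P_{\mathrm{fin},0}(\mathbb N_0)$ is its submonoid of sets containing $0$. These are commutative, reduced, unit-cancellative. An element $p$ is prime if it is a non-unit and $p\mid a+b$ implies $p\mid a$ or $p\mid b$; cancellative if $p+b=p+c$ implies $b=c$. $\mathcal I(R)$ is the semigroup of nonzero ideals under multiplication. Arithmetic notions: atoms; $\mathsf L(a)$ = set of lengths of factorizations of $a$ into atoms (up to units); $\mathcal L(H)=\{\mathsf L(a)\}$; BF-monoid: all $\mathsf L(a)$ finite nonempty; $\rho(L)=\max L/\min L$, $\rho(\{0\})=1$, $\rho(H)=\sup\rho(L)$; fully elastic: every rational $q$ with $1<q<\rho(H)$ equals $\rho(L)$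 for some $L\in\mathcal L(H)$. *)

From HB Require Import structures.
From mathcomp Require Import all_boot all_algebra.
From mathcomp Require Import finmap.
From mathcomp Require Import mpoly.

Set Implicit Arguments.
Unset Strict Implicit.
Unset Printing Implicit Defensive.

Import GRing.Theory Num.Theory.
Local Open Scope fset_scope.

(* Arithmetic notions for a commutative monoid H, presented as a       *)
(* subset [S] of a type [T] closed under [op], with identity [e].      *)
Section MonoidNotions.
Variables (T : Type) (S : T -> Prop) (op : T -> T -> T) (e : T).

Definition mdvd (a b : T) : Prop := exists c, S c /\ b = op a c.

Definition munit (u : T) : Prop := S u /\ exists v, S v /\ op u v = e.

Definition matom (a : T) : Prop :=
  S a /\ ~ munit a /\
  forall b c, S b -> S c -> a = op b c -> munit b \/ munit c.

Definition mprime (p : T) : Prop :=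
  S p /\ ~ munit p /\
  forall a b, S a -> S b -> mdvd p (op a b) -> mdvd p a \/ mdvd p b.

Definition mcancellative (p : T) : Prop :=
  forall b c, S b -> S c -> op p b = op p c -> b = c.

Definition mlengths (a : T) (k : nat) : Prop :=
  exists (l : seq T) (u : T),
    size l = k /\ (forall i, (i < size l)%N -> matom (nth e l i)) /\
    munit u /\ a = op u (foldr op e l).

Definition mBF : Prop :=
  forall a, S a -> (exists k, mlengths a k) /\
                   (exists N, forall k, mlengths a k -> (k <= N)%N).

(* rho(L) = r  (with rho({0}) = 1) *)
Definition rho_is (L : nat -> Prop) (r : rat) : Prop :=
  ((forall k, L k <-> k = 0%N) /\ r = 1%R) \/
  exists k m : nat, L k /\ L m /\ (0 < m)%N /\
     (forall x, L x -> (m <= x <= k)%N) /\ r = (k%:R / m%:R)%R.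

(* q < rho(H) = sup { rho(L(a)) } *)
Definition elasticity_gt (q : rat) : Prop :=
  exists a, S a /\ exists k m : nat,
    mlengths a k /\ mlengths a m /\ (0 < m)%N /\ (q * m%:R < k%:R)%R.

Definition fully_elastic : Prop :=
  forall q : rat, (1 < q)%R -> elasticity_gt q ->
    exists a, S a /\ rho_is (mlengths a) q.

End MonoidNotions.

Definition psum (A B : {fset nat}) : {fset nat} := [fset (a + b)%N | a in A, b in B].

Definition Pfin (A : {fset nat}) : Prop := A != fset0.
Definition Pfin0 (A : {fset nat}) : Prop := (0 \in A).

Definition pone_pow (k : nat) : {fset nat} := iter k (psum [fset 1]) [fset 0].

(* The semigroup I(R) of nonzero ideals of a commutative ring R        *)
(* (ideals as predicates, ideal product = finite sums of products)     *)
Section Ideals.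
Variable R : comRingType.
Local Open Scope ring_scope.

Definition is_ideal (I : R -> Prop) : Prop :=
  I 0 /\ (forall x y, I x -> I y -> I (x + y)) /\ (forall r x, I x -> I (r * x)).

Definition nz_ideal (I : R -> Prop) : Prop := is_ideal I /\ exists x, I x /\ x != 0.

Definition ideal_mul (I J : R -> Prop) : R -> Prop :=
  fun x => exists s : seq (R * R),
    (forall p, p \in s -> I p.1 /\ J p.2) /\ x = \sum_(p <- s) p.1 * p.2.

Definition full_ideal : R -> Prop := fun _ => True.
End Ideals.

From HB Require Import structures.
From mathcomp Require Import all_boot all_algebra.
From mathcomp Require Import finmap.
From mathcomp Require Import mpoly.
From mathcomp Require Import all_order zify ring lra.
From Stdlib Require Import FunctionalExtensionality PropExtensionality.
Import Order.TTheory GRing.Theory Num.Theory.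
Set Implicit Arguments.
Unset Strict Implicit.
Local Open Scope fset_scope.

(* Part 1.  Adding a singleton {c} translates a set by c, so {1} is
   cancellative, k.{1} = {k} generates a free monoid, and every A is uniquely
   {min A} + (A - min A) with 0 in the second summand.  {1} divides A exactly
   when 0 is not in A, and 0 lies in A + B iff it lies in A and in B; hence {1}
   is prime.  For full elasticity write q = k/m > 1 and take the interval
   [a, a + N] with a = 2m - 2, N = 2(k - m + 1).  It is a.{1} + N.{0,1}
   (length 2k) and a.{1} + {0,1} + ({0} u odd numbers < N) (length 2m).
   Conversely, a sum of atoms has an element at least its length, and its
   atoms avoiding 0 are copies of {1} accounting for the minimum a; the other
   atoms sum to [0, N], which is neither {0} nor an atom, so there are at least
   two of them.  Thus rho(L([a, a + N])) = 2k/2m = q.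

   Part 2.  A is sent to the monomial ideal of D[X_1, ..., X_n] generated by
   the X_1^a X_2^(max A - a), a in A.  As max is additive on sum sets this is a
   monoid homomorphism into I(R); comparing exponents of monomials, the ideal
   determines max A, and then A itself. *)

Lemma psumP x A B :
  reflect (exists a b, [/\ a \in A, b \in B & x = (a + b)%N]) (x \in psum A B).
Proof.
apply: (iffP (imfset2P _ _ _ _ _)).
  by move=> [a aA [b bB ->]]; exists a, b.
by move=> [a [b [aA bB ->]]]; exists a => //; exists b.
Qed.

Lemma psum_in a b A B : a \in A -> b \in B -> (a + b)%N \in psum A B.
Proof. by move=> aA bB; apply/psumP; exists a, b. Qed.

Lemma psumC A B : psum A B = psum B A.
Proof.
apply/fsetP=> x; apply/psumP/psumP => [][a [b [aA bB ->]]]; exists b, a; split=> //; lia.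
Qed.

Lemma psumA A B C : psum A (psum B C) = psum (psum A B) C.
Proof.
apply/fsetP=> x; apply/psumP/psumP => [][a [y [aA yBC ->]]].
  case/psumP: yBC => b [c [bB cC ->]]; exists (a + b)%N, c.
  by split; [exact: psum_in | done | lia].
case/psumP: aA => b [c [bB cC ->]]; exists b, (c + y)%N.
by split; [done | exact: psum_in | lia].
Qed.

Lemma psum1P c x A : (x \in psum [fset c] A) = (c <= x)%N && ((x - c)%N \in A).
Proof.
apply/psumP/andP => [[a [b [aA bB ->]]]|[cx xA]].
  by move: aA; rewrite in_fset1 => /eqP ->; rewrite addKn; split => //; lia.
by exists c, (x - c)%N; split => //; [rewrite in_fset1 | lia].
Qed.

Lemma psum0 A : psum [fset 0] A = A.
Proof. by apply/fsetP=> x; rewrite psum1P subn0. Qed.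

Lemma psumA0 A : psum A [fset 0] = A.
Proof. by rewrite psumC psum0. Qed.

Lemma psum11 a b : psum [fset a] [fset b] = [fset (a + b)%N].
Proof. by apply/fsetP=> x; rewrite psum1P !in_fset1; apply/andP/eqP => [[? /eqP]|->]; lia. Qed.

Lemma psum1_inj c A B : psum [fset c] A = psum [fset c] B -> A = B.
Proof.
move=> e; apply/fsetP=> x; have := congr1 (fun S => (x + c)%N \in S) e.
by rewrite /= !psum1P leq_addl addnK.
Qed.

Lemma psum1_inj0 c d A B : 0 \in A -> 0 \in B ->
  psum [fset c] A = psum [fset d] B -> c = d /\ A = B.
Proof.
move=> A0 B0 e; have cd : c = d.
  have := congr1 (fun S => c \in S) e; have := congr1 (fun S => d \in S) e.
  by rewrite /= !psum1P !subnn A0 B0 !leqnn => /andP [le_cd _] /esym /andP [le_dc _]; lia.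
by subst d; split; last exact: psum1_inj e.
Qed.

Lemma Pfin1 c : Pfin [fset c].
Proof. by apply/fset0Pn; exists c; rewrite in_fset1. Qed.

Lemma Pfin_psum A B : Pfin A -> Pfin B -> Pfin (psum A B).
Proof.
by move=> /fset0Pn [a aA] /fset0Pn [b bB]; apply/fset0Pn; exists (a + b)%N; exact: psum_in.
Qed.

Lemma mem0_psum A B : (0 \in psum A B) = (0 \in A) && (0 \in B).
Proof.
apply/psumP/andP => [[a [b [aA bB e]]]|[A0 B0]]; last by exists 0%N, 0%N.
have [a0 b0] : a = 0%N /\ b = 0%N by lia.
by subst.
Qed.

Lemma eq_fset0 A : Pfin A -> (forall x, x \in A -> x = 0%N) -> A = [fset 0].
Proof.
move=> /fset0Pn [a aA] h; apply/fsetP => x; rewrite in_fset1; apply/idP/eqP => [/h //|->].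
by rewrite -(h a aA).
Qed.

Lemma unitP u : munit Pfin psum [fset 0] u <-> u = [fset 0].
Proof.
split=> [[Pu [v [/fset0Pn [y yv] e]]]|->].
  apply: eq_fset0 => // x xu.
  by have := psum_in xu yv; rewrite e in_fset1 => /eqP; lia.
by split; [exact: Pfin1 | exists [fset 0]; split; [exact: Pfin1 | exact: psum0]].
Qed.

Lemma not_unit1 : ~ munit Pfin psum [fset 0] [fset 1].
Proof. by move/unitP/fsetP => /(_ 1%N); rewrite !in_fset1. Qed.

Lemma nonunit_pos X : Pfin X -> X != [fset 0] -> exists2 x, x \in X & (0 < x)%N.
Proof.
move=> PX nX; case: (boolP [exists x : X, 0 < val x]%N) => [/existsP [x h]|/existsPn h].
  by exists (val x) => //; apply: valP.
by case/eqP: nX; apply: eq_fset0 => // x xX; have := h [` xX]; rewrite /=; lia.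
Qed.

Lemma pone_powE k : pone_pow k = [fset k].
Proof. by elim: k => [//|k IH]; rewrite /pone_pow iterS -/(pone_pow k) IH psum11. Qed.

Lemma pone_pow_inj k1 k2 : pone_pow k1 = pone_pow k2 -> k1 = k2.
Proof. by rewrite !pone_powE => /fsetP /(_ k1); rewrite !in_fset1 eqxx => /esym /eqP. Qed.

Definition shift_down (A : {fset nat}) : {fset nat} := [fset x.-1 | x in A].

Lemma shift_downK A : 0 \notin A -> A = psum [fset 1] (shift_down A).
Proof.
move=> nA; apply/fsetP=> x; rewrite psum1P; apply/idP/andP => [xA|[x1 /imfsetP [y /= yA e]]].
  have x0 : x != 0%N by apply: contraNneq nA => <-.
  by split; [lia | apply/imfsetP; exists x => //=; lia].
have y0 : y != 0%N by apply: contraNneq nA => <-.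
by have -> : x = y by lia.
Qed.

Lemma Pfin_shift_down A : Pfin A -> Pfin (shift_down A).
Proof. by case/fset0Pn => a aA; apply/fset0Pn; exists a.-1; exact: in_imfset. Qed.

Lemma dvd1P A : Pfin A -> mdvd Pfin psum [fset 1] A <-> 0 \notin A.
Proof.
move=> PA; split=> [[c [Pc ->]]|nA]; first by rewrite psum1P.
by exists (shift_down A); split; [exact: Pfin_shift_down | exact: shift_downK].
Qed.

(* {1} is prime, since 0 lies in a sum iff it lies in both summands. *)
Lemma prime1 : mprime Pfin psum [fset 0] [fset 1].
Proof.
split; first exact: Pfin1; split; first exact: not_unit1.
move=> a b Pa Pb /(dvd1P (Pfin_psum Pa Pb)); rewrite mem0_psum negb_and.
by case/orP => h; [left | right]; apply/dvd1P.
Qed.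

(* Every A factors uniquely as k.{1} + B with 0 \in B, namely k = min A. *)
Lemma unique_decomposition A : Pfin A ->
  exists! kB : nat * {fset nat}, Pfin0 kB.2 /\ A = psum (pone_pow kB.1) kB.2.
Proof.
move=> /fset0Pn ex.
pose k := ex_minn ex.
have kA : k \in A by rewrite /k; case: ex_minnP.
have kmin x : x \in A -> (k <= x)%N by rewrite /k; case: ex_minnP => ? ? /(_ x).
have eA : A = psum [fset k] [fset (x - k)%N | x in A].
  apply/fsetP=> x; rewrite psum1P; apply/idP/andP => [xA|[kx /imfsetP [y /= yA e]]].
    by split; [exact: kmin | apply/imfsetP; exists x].
  by have ky := kmin _ yA; have -> : x = y by lia.
have B0 : 0 \in [fset (x - k)%N | x in A] by apply/imfsetP; exists k => //; lia.
exists (k, [fset (x - k)%N | x in A]); split; first by rewrite pone_powE.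
by move=> [k' B'] [/= B'0]; rewrite pone_powE {1}eA => /esym /(psum1_inj0 B'0 B0) [-> ->].
Qed.

Local Notation atom := (matom Pfin psum [fset 0]).

(* A set Y containing 0 whose maximum y is not a sum of two positive elements
   of Y is an atom: in Y = B + C both B and C lie inside Y, and y = b + c. *)
Lemma atom_crit Y y : 0 \in Y -> y \in Y -> (0 < y)%N ->
  (forall x, x \in Y -> x <= y)%N ->
  (forall a b, a \in Y -> b \in Y -> 0 < a -> 0 < b -> a + b != y)%N -> atom Y.
Proof.
move=> Y0 yY ypos ymax nsum.
have PY : Pfin Y by apply/fset0Pn; exists 0%N.
split=> //; split=> [/unitP eY|B C PB PC eY]; first by move: yY; rewrite eY in_fset1; lia.
move: (Y0); rewrite eY mem0_psum => /andP [B0 C0].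
have [->|nB] := eqVneq B [fset 0]; first by left; apply/unitP.
have [->|nC] := eqVneq C [fset 0]; first by right; apply/unitP.
have [b' b'B b'p] := nonunit_pos PB nB; have [c' c'C c'p] := nonunit_pos PC nC.
have inY b c : b \in B -> c \in C -> (b + c)%N \in Y by rewrite eY; exact: psum_in.
move: (yY); rewrite eY => /psumP [b [c [bB cC ey]]].
have [b0|bp] := posnP b; first by have := ymax _ (inY _ _ b'B cC); lia.
have [c0|cp] := posnP c; first by have := ymax _ (inY _ _ bB c'C); lia.
have := nsum _ _ (inY _ _ bB C0) (inY _ _ B0 cC); rewrite !addn0 add0n ey eqxx.
by move=> /(_ bp cp).
Qed.

Lemma atom1 : atom [fset 1].
Proof.
split; first exact: Pfin1; split; first exact: not_unit1.
move=> B C /fset0Pn [b bB] /fset0Pn [c cC] e.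
have sum1 x y : x \in B -> y \in C -> (x + y)%N = 1%N.
  by move=> xB yC; apply/eqP; rewrite -in_fset1 e; exact: psum_in.
have [b0|bp] := posnP b.
  left; apply/unitP/eq_fset0 => [|x xB]; first by apply/fset0Pn; exists b.
  by have := sum1 _ _ xB cC; have := sum1 _ _ bB cC; lia.
right; apply/unitP/eq_fset0 => [|x xC]; first by apply/fset0Pn; exists c.
by have := sum1 _ _ bB xC; have := sum1 _ _ bB cC; lia.
Qed.

Lemma atom01 : atom [fset 0; 1].
Proof.
apply: (@atom_crit _ 1%N); rewrite ?in_fset2 //.
  by move=> x; rewrite in_fset2 => /orP [] /eqP ->.
by move=> a b; rewrite !in_fset2 => /orP [] /eqP -> /orP [] /eqP ->.
Qed.

(* The only atom avoiding 0 is {1}, as {1} divides every set avoiding 0. *)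
Lemma atom_no0 X : atom X -> 0 \notin X -> X = [fset 1].
Proof.
move=> [PX [_ irr]] nX; have e := shift_downK nX.
case: (irr _ _ (Pfin1 1) (Pfin_shift_down PX) e) => [/not_unit1 //|/unitP ep].
by rewrite e ep psum11.
Qed.

Lemma atom_pos X : atom X -> exists2 x, x \in X & (0 < x)%N.
Proof.
move=> [PX [nu _]]; apply: nonunit_pos => //.
by apply/eqP => eX; apply: nu; apply/unitP.
Qed.

Definition psum_seq (l : seq {fset nat}) : {fset nat} := foldr psum [fset 0] l.

Definition atoms (l : seq {fset nat}) : Prop := forall X, X \in l -> atom X.

Lemma atoms_behead X l : atoms (X :: l) -> atoms l.
Proof. by move=> hat Y Yl; apply: hat; rewrite in_cons Yl orbT. Qed.

(* As {0} is the only unit, k \in L(A) iff A is a sum of k atoms. *)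
Lemma mlengthsP A k :
  mlengths Pfin psum [fset 0] A k <->
  exists l, [/\ size l = k, atoms l & A = psum_seq l].
Proof.
split=> [[l [u [sl [hat [/unitP -> ->]]]]]|[l [sl hat ->]]].
  exists l; split; [done | | by rewrite psum0].
  by move=> X /(nthP [fset 0]) [i il <-]; apply: hat.
exists l, [fset 0]; split=> //; split; first by move=> i il; apply/hat/mem_nth.
by split; [apply/unitP | rewrite psum0].
Qed.

(* A sum of k atoms contains an element >= k: lengths are bounded by the
   maximum. *)
Lemma length_le_max l : atoms l -> exists2 x, x \in psum_seq l & (size l <= x)%N.
Proof.
elim: l => [|X l IH] hat /=; first by exists 0%N; rewrite ?in_fset1.
have [x xl sx] := IH (atoms_behead hat).
have [y yX yp] := atom_pos (hat X (mem_head _ _)).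
by exists (y + x)%N; [exact: psum_in | lia].
Qed.

(* In a factorization the atoms avoiding 0 are copies of {1}, so they only
   contribute a translation. *)
Lemma psum_seq_split l : atoms l ->
  psum_seq l = psum [fset count (predC (fun X => 0 \in X)) l]
                    (psum_seq [seq X <- l | 0 \in X]).
Proof.
elim: l => [|X l IH] hat /=; first by rewrite psum0.
rewrite IH; last exact: atoms_behead hat.
have [X0|nX0] := boolP (0 \in X) => /=.
  by rewrite add0n !psumA [psum X _]psumC.
by rewrite (atom_no0 (hat X (mem_head _ _)) nX0) psumA psum11.
Qed.

Lemma mem0_psum_seq l : 0 \in psum_seq [seq X <- l | 0 \in X].
Proof.
by elim: l => [|X l IH] /=; [rewrite in_fset1 | case: ifP => //= X0; rewrite mem0_psum X0].
Qed.

(* If A = c + Z with 0 \in Z, and Z is neither a unit nor an atom, then every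
   factorization of A consists of c copies of {1} and at least two atoms
   summing to Z. *)
Lemma length_ge l c (Z : {fset nat}) :
  atoms l -> 0 \in Z -> Z != [fset 0] -> ~ atom Z ->
  psum_seq l = psum [fset c] Z -> (c + 2 <= size l)%N.
Proof.
move=> hat Z0 nZ nAZ; rewrite psum_seq_split // => /(psum1_inj0 (mem0_psum_seq l) Z0).
case=> <- eZ; rewrite -(count_predC (fun X : {fset nat} => 0 \in X) l).
rewrite [X in (_ <= X)%N]addnC leq_add2l -size_filter.
have atZ : {subset [seq X : {fset nat} <- l | 0 \in X] <= l}.
  by move=> X; rewrite mem_filter => /andP [].
move: atZ eZ; case: [seq X : {fset nat} <- l | 0 \in X] => [|X [|Y t]] //= atZ eZ.
  by rewrite -eZ eqxx in nZ.
by case: nAZ; rewrite -eZ psumA0; apply/hat/atZ; rewrite mem_head.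
Qed.

Definition itv a b : {fset nat} := [fset x | x in iota a (b.+1 - a)].

Lemma in_itv a b x : (x \in itv a b) = (a <= x <= b)%N.
Proof.
apply/imfsetP/idP => [[y /= yI ->]|h]; first by move: yI; rewrite mem_iota; lia.
by exists x => //=; rewrite mem_iota; lia.
Qed.

Lemma itv_shift c N : psum [fset c] (itv 0 N) = itv c (c + N).
Proof. by apply/fsetP => x; rewrite psum1P !in_itv; lia. Qed.

Lemma itv_succ r : psum [fset 0; 1] (itv 0 r) = itv 0 r.+1.
Proof.
apply/fsetP => x; rewrite in_itv; apply/psumP/idP => [[a [b [aA bB ->]]]|xr].
  by move: aA bB; rewrite in_fset2 in_itv; case/orP => /eqP ->; lia.
have [->|x0] := eqVneq x 0%N; first by exists 0%N, 0%N; rewrite in_fset2 in_itv.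
by exists 1%N, x.-1; rewrite in_fset2 in_itv; split => //; lia.
Qed.

(* [0, N] = {0,1} + [0, N - 1] is not an atom once N >= 2. *)
Lemma itv_not_atom N : (2 <= N)%N -> ~ atom (itv 0 N).
Proof.
move=> N2 [_ [_ irr]].
have P01 : Pfin [fset 0; 1] by apply/fset0Pn; exists 0%N; rewrite in_fset2.
have Pitv : Pfin (itv 0 N.-1) by apply/fset0Pn; exists 0%N; rewrite in_itv.
have := irr _ _ P01 Pitv; rewrite itv_succ prednK; last lia.
by case=> // /unitP /fsetP /(_ 1%N); rewrite in_fset1 ?in_fset2 ?in_itv //; lia.
Qed.

Lemma psum_seq_ones p l : psum_seq (nseq p [fset 1] ++ l) = psum [fset p] (psum_seq l).
Proof. by elim: p => [|p IH] /=; [rewrite psum0 | rewrite IH psumA psum11]. Qed.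

Lemma psum_seq_01 r : psum_seq (nseq r [fset 0; 1]) = itv 0 r.
Proof.
elim: r => [|r IH] /=; last by rewrite IH itv_succ.
by apply/fsetP=> x; rewrite in_itv in_fset1; apply/eqP/idP; lia.
Qed.

(* For even N >= 2, the set of 0 and the odd numbers below N is an atom
   (its maximum N - 1 is odd, hence not a sum of two odd numbers), and
   {0,1} + it = [0, N]. *)
Definition odd_atom N : {fset nat} :=
  [fset x | x in [seq x <- iota 0 N | (x == 0%N) || odd x]].

Lemma in_odd_atom N x : (x \in odd_atom N) = (x < N)%N && ((x == 0%N) || odd x).
Proof.
apply/imfsetP/idP => [[y /= + ->]|/andP [xN hx]].
  by rewrite mem_filter mem_iota andbC add0n.
by exists x => //=; rewrite mem_filter mem_iota hx.
Qed.

Lemma atom_odd N : (2 <= N)%N -> ~~ odd N -> atom (odd_atom N).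
Proof.
move=> N2 evN; have oN : odd N.-1 by move: evN; case: N N2 => //= n _; rewrite negbK.
apply: (@atom_crit _ N.-1); rewrite ?in_odd_atom ?eqxx ?oN ?orbT; try lia.
  by move=> x; rewrite in_odd_atom; lia.
move=> a b; rewrite !in_odd_atom => /andP [_ ha] /andP [_ hb] ap bp.
rewrite lt0n in ap; rewrite lt0n in bp.
move: ha hb; rewrite (negbTE ap) (negbTE bp) /= => oa ob.
by apply: contraTneq oN => <-; rewrite oddD oa ob.
Qed.

Lemma odd_atom_sum N : (2 <= N)%N -> ~~ odd N -> psum [fset 0; 1] (odd_atom N) = itv 0 N.
Proof.
move=> N2 evN; apply/fsetP => x; rewrite in_itv; apply/psumP/idP.
  move=> [a [b [aA bB ->]]]; move: aA bB; rewrite in_fset2 in_odd_atom.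
  by case/orP => /eqP -> /andP [bN hb]; lia.
move=> xN; have [hx|hx] := boolP ((x == 0%N) || odd x).
  exists 0%N, x; rewrite in_fset2 eqxx in_odd_atom hx andbT; split => //.
  case/orP: hx => [/eqP ->|ox]; first lia.
  by have [exN|] := eqVneq x N; [rewrite -exN ox in evN | lia].
case: x xN hx => // x xN; rewrite /= negbK => ox.
by exists 1%N, x; rewrite in_fset2 in_odd_atom ox orbT andbT; split => //; lia.
Qed.

Local Notation lengths := (mlengths Pfin psum [fset 0]).

Lemma itv_lengths a N : (2 <= N)%N -> ~~ odd N ->
  [/\ lengths (itv a (a + N)) (a + N), lengths (itv a (a + N)) (a + 2) &
      forall x, lengths (itv a (a + N)) x -> (a + 2 <= x <= a + N)%N].
Proof.
move=> N2 evN; split.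
- apply/mlengthsP; exists (nseq a [fset 1] ++ nseq N [fset 0; 1]); split.
  + by rewrite size_cat !size_nseq.
  + by move=> X; rewrite mem_cat => /orP [] /nseqP [-> _]; [exact: atom1 | exact: atom01].
  + by rewrite psum_seq_ones psum_seq_01 itv_shift.
- apply/mlengthsP; exists (nseq a [fset 1] ++ [:: [fset 0; 1]; odd_atom N]); split.
  + by rewrite size_cat size_nseq.
  + move=> X; rewrite mem_cat => /orP [/nseqP [-> _]|]; first exact: atom1.
    by rewrite !inE => /orP [] /eqP ->; [exact: atom01 | exact: atom_odd].
  + by rewrite psum_seq_ones /= psumA0 odd_atom_sum // itv_shift.
move=> x /mlengthsP [l [<- hat eA]]; apply/andP; split.
  apply: (length_ge hat (Z := itv 0 N)); rewrite ?in_itv ?itv_shift //.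
    by apply/eqP => /fsetP /(_ 1%N); rewrite in_itv in_fset1; lia.
  exact: itv_not_atom.
by have [y] := length_le_max hat; rewrite -eA in_itv; lia.
Qed.

Section Rationals.
Local Open Scope ring_scope.

Lemma rat_frac (q : rat) : 1 < q -> exists k m : nat, (0 < m < k)%N /\ q = k%:R / m%:R.
Proof.
move=> q1; have n0 : 0 < numq q by rewrite numq_gt0; lra.
have d0 := denq_gt0 q.
exists `|numq q|%N, `|denq q|%N.
have eq : q = (`|numq q|%N)%:R / (`|denq q|%N)%:R.
  by rewrite !natr_absz !ger0_norm ?ltW // divq_num_den.
split=> //; rewrite absz_gt0 denq_neq0 /= -(ltr_nat rat).
by rewrite eq ltr_pdivlMr ?mul1r ?ltr0n ?absz_gt0 ?denq_neq0 // -eq in q1.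
Qed.

Lemma rat_frac_double (k m : nat) : (0 < m)%N -> (k%:R / m%:R : rat) = (2 * k)%:R / (2 * m)%:R.
Proof. by move=> m0; rewrite !natrM; field; rewrite pnatr_eq0 -lt0n m0. Qed.

End Rationals.

(* Every q = k/m > 1 is the elasticity rho(L([2m - 2, 2k])) = 2k/2m. *)
Lemma fully_elastic_Pfin : fully_elastic Pfin psum [fset 0].
Proof.
move=> q q1 _; have [k [m [/andP [m0 mk] ->]]] := rat_frac q1.
have N2 : (2 <= (k - m).+1.*2)%N by lia.
have [h1 h2 h3] := itv_lengths (2 * m - 2) N2 (negbT (odd_double _)).
have e1 : (2 * m - 2 + (k - m).+1.*2 = 2 * k)%N by rewrite -muln2; lia.
have e2 : (2 * m - 2 + 2 = 2 * m)%N by lia.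
rewrite e1 e2 in h1 h2 h3.
exists (itv (2 * m - 2) (2 * k)); split.
  by apply/fset0Pn; exists (2 * k)%N; rewrite in_itv; lia.
right; exists (2 * k)%N, (2 * m)%N; do 2 split=> //.
by split; [lia | split=> //; exact: rat_frac_double].
Qed.

Lemma mem_bigmax_seq (r : seq nat) x : x \in r -> (\max_(i <- r) i)%N \in r.
Proof.
elim: r x => // h t IH x _; rewrite big_cons.
case: t IH => [|h' t'] IH; first by rewrite big_nil maxn0 mem_head.
have := IH h' (mem_head _ _); rewrite /maxn; case: ifP => _ H.
  by rewrite in_cons H orbT.
by rewrite mem_head.
Qed.

Definition maxs (A : {fset nat}) : nat := (\max_(a <- A) a)%N.

Lemma mem_maxs A a : a \in A -> maxs A \in A.
Proof. exact: mem_bigmax_seq. Qed.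

Lemma leq_maxs A a : a \in A -> (a <= maxs A)%N.
Proof. by move=> aA; exact: (leq_bigmax_seq a aA). Qed.

Lemma maxs_psum A B : Pfin A -> Pfin B -> maxs (psum A B) = (maxs A + maxs B)%N.
Proof.
move=> /fset0Pn [a aA] /fset0Pn [b bB]; apply/eqP; rewrite eqn_leq; apply/andP; split.
  apply/bigmax_leqP_seq => c /psumP [x [y [xA yB ->]]] _.
  exact: leq_add (leq_maxs xA) (leq_maxs yB).
by apply/leq_maxs/psum_in; [exact: (mem_maxs aA) | exact: (mem_maxs bB)].
Qed.

Lemma maxs0 : maxs [fset 0] = 0%N.
Proof. by have := mem_maxs (fset11 0%N); rewrite in_fset1 => /eqP. Qed.

Section IdealSums.
Variable R : comRingType.
Local Open Scope ring_scope.

Lemma ideal_sum (I : R -> Prop) (T : eqType) (r : seq T) (G : T -> R) :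
  is_ideal I -> (forall i, i \in r -> I (G i)) -> I (\sum_(i <- r) G i).
Proof.
move=> [I0 [ID _]]; elim: r => [|h t IH] hr; first by rewrite big_nil.
rewrite big_cons; apply: ID; first by apply: hr; rewrite mem_head.
by apply: IH => i it; apply: hr; rewrite in_cons it orbT.
Qed.

Lemma ideal_mul_ideal (I J : R -> Prop) : is_ideal I -> is_ideal (ideal_mul I J).
Proof.
move=> [_ [_ IM]]; split; first by exists [::]; rewrite big_nil.
split=> [x y [s [hs ->]] [t [ht ->]]|r x [s [hs ->]]].
  exists (s ++ t); split; last by rewrite big_cat.
  by move=> p; rewrite mem_cat => /orP [/hs|/ht].
exists [seq (r * p.1, p.2) | p <- s]; split.
  by move=> p /mapP [q /hs [h1 h2] ->]; split => //; apply: IM.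
by rewrite big_map mulr_sumr; apply: eq_bigr => p _ /=; rewrite mulrA.
Qed.

Lemma sum_single (F : nat -> R) (A : {fset nat}) a :
  a \in A -> (forall x, x \in A -> x != a -> F x = 0) -> \sum_(x <- A) F x = F a.
Proof.
move=> aA h; rewrite (bigD1_seq a) //= ?fset_uniq // big_seq_cond big1 ?addr0 //.
by move=> x /andP [xA xa]; apply: h.
Qed.

End IdealSums.

Section MonomialIdeals.
Variables (D : idomainType) (n : nat).
Local Open Scope ring_scope.

Definition mon2 (a b : nat) : 'X_{1..n} :=
  [multinom (if val i == 0%N then a else if val i == 1%N then b else 0%N) | i < n].

Definition gen (A : {fset nat}) (a : nat) : {mpoly D[n]} := 'X_[mon2 a (maxs A - a)].

Definition mideal (A : {fset nat}) : {mpoly D[n]} -> Prop :=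
  fun p => exists c : nat -> {mpoly D[n]}, p = \sum_(a <- A) c a * gen A a.

Lemma mon2D a b c d : (mon2 a b + mon2 c d)%MM = mon2 (a + c) (b + d).
Proof.
apply/mnmP => i; rewrite mnmDE !mnmE.
by case: (val i == 0%N); case: (val i == 1%N).
Qed.

(* Generators multiply like the elements of the sum set, as max is additive. *)
Lemma gen_mul A B a b : Pfin A -> Pfin B -> a \in A -> b \in B ->
  gen A a * gen B b = gen (psum A B) (a + b).
Proof.
move=> PA PB aA bB; rewrite /gen -mpolyXD mon2D maxs_psum //.
have la := leq_maxs aA; have lb := leq_maxs bB.
by congr ('X_[mon2 _ _]); lia.
Qed.

Lemma gen_neq0 A a : gen A a != 0.
Proof.
apply/eqP => h; have := congr1 (mcoeff (mon2 a (maxs A - a))) h.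
by rewrite mcoeffX eqxx mcoeff0 => /eqP; rewrite oner_eq0.
Qed.

Lemma mideal_ideal A : is_ideal (mideal A).
Proof.
split; first by exists (fun=> 0); rewrite big1 // => a _; rewrite mul0r.
split=> [x y [c ->] [d ->]|r x [c ->]].
  by exists (fun a => c a + d a); rewrite -big_split; apply: eq_bigr => a _; rewrite mulrDl.
by exists (fun a => r * c a); rewrite mulr_sumr; apply: eq_bigr => a _; rewrite mulrA.
Qed.

Lemma gen_in A a : a \in A -> mideal A (gen A a).
Proof.
move=> aA; exists (fun x => (x == a)%:R).
by rewrite (sum_single aA) ?eqxx ?mul1r // => x _ /negbTE ->; rewrite mul0r.
Qed.

Lemma mideal_nz A : Pfin A -> nz_ideal (mideal A).
Proof.
move=> /fset0Pn [a aA]; split; first exact: mideal_ideal.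
by exists (gen A a); split; [exact: gen_in | exact: gen_neq0].
Qed.

Lemma mideal0 : mideal [fset 0] = @full_ideal {mpoly D[n]}.
Proof.
apply: functional_extensionality => x; apply: propositional_extensionality.
split=> // _; exists (fun=> x); rewrite (sum_single (fset11 0%N)); last first.
  by move=> y; rewrite in_fset1 => ->.
have -> : gen [fset 0] 0 = 1.
  rewrite /gen maxs0 -mpolyX0; congr ('X_[_]); apply/mnmP => i; rewrite mnmE mnm0E.
  by case: (val i == 0%N); case: (val i == 1%N).
by rewrite mulr1.
Qed.

(* f(A + B) = f(A) f(B): both are generated by the products of generators. *)
Lemma mideal_psum A B :
  Pfin A -> Pfin B -> mideal (psum A B) = ideal_mul (mideal A) (mideal B).
Proof.
move=> PA PB; have [_ [_ mulA]] := mideal_ideal A.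
have [_ [_ mulAB]] := mideal_ideal (psum A B).
apply: functional_extensionality => x; apply: propositional_extensionality; split.
  move=> [d ->]; apply: ideal_sum; first exact/ideal_mul_ideal/mideal_ideal.
  move=> _ /psumP [a [b [aA bB ->]]].
  exists [:: (d (a + b)%N * gen A a, gen B b)]; split.
    by move=> p; rewrite mem_seq1 => /eqP -> /=; split; [apply/mulA/gen_in | apply: gen_in].
  by rewrite big_seq1 /= -mulrA gen_mul.
move=> [s [hs ->]]; apply: ideal_sum; first exact: mideal_ideal.
move=> p /hs [[c ->] [e ->]]; rewrite mulr_suml; apply: ideal_sum; first exact: mideal_ideal.
move=> a aA; rewrite mulr_sumr; apply: ideal_sum; first exact: mideal_ideal.
by move=> b bB; rewrite mulrACA gen_mul //; apply/mulAB/gen_in/psum_in.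
Qed.

Lemma mcoeff_mulX_le (p : {mpoly D[n]}) m k : (p * 'X_[m])@_k != 0 -> (m <= k)%MM.
Proof.
rewrite -mcoeff_msupp (perm_mem (msuppMX p m)) => /mapP [m' _ ->]; exact: lem_addr.
Qed.

(* From now on X_1 and X_2 are distinct variables. *)
Hypothesis n_ge2 : (1 < n)%N.

Lemma mon2_le a b c d : (mon2 b d <= mon2 a c)%MM -> (b <= a)%N /\ (d <= c)%N.
Proof.
move/mnm_lepP => le; split.
  by have := le (Ordinal (ltnW n_ge2)); rewrite !mnmE.
by have := le (Ordinal n_ge2); rewrite !mnmE.
Qed.

Lemma mideal_mon B a M : mideal B 'X_[mon2 a (M - a)] ->
  exists2 b, b \in B & (b <= a)%N && (maxs B - b <= M - a)%N.
Proof.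
move=> [c e]; apply/hasP; apply: contraT => /hasPn none.
have := congr1 (mcoeff (mon2 a (M - a))) e.
rewrite mcoeffX eqxx raddf_sum big1_seq => [/eqP|b /andP [_ bB]]; first by rewrite oner_eq0.
by apply: contraNeq (none b bB) => /mcoeff_mulX_le /mon2_le [-> ->].
Qed.

(* f(A) = f(B) forces max A = max B ... *)
Lemma maxs_le A B : Pfin A -> mideal A = mideal B -> (maxs B <= maxs A)%N.
Proof.
move=> /fset0Pn [a aA] E.
have : mideal B (gen A (maxs A)) by rewrite -E; apply/gen_in/(mem_maxs aA).
by case/mideal_mon => b /leq_maxs; lia.
Qed.

(* ... and then A = B, since each generator of f(A) must be one of f(B). *)
Lemma mideal_subset A B : maxs A = maxs B -> mideal A = mideal B -> {subset A <= B}.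
Proof.
move=> eM E a aA; have : mideal B (gen A a) by rewrite -E; apply: gen_in.
case/mideal_mon => b bB /andP [ba bM]; have := leq_maxs aA; rewrite eM => aM.
by have -> : a = b by lia.
Qed.

Lemma mideal_inj A B : Pfin A -> Pfin B -> mideal A = mideal B -> A = B.
Proof.
move=> PA PB E.
have eM : maxs A = maxs B by apply/eqP; rewrite eqn_leq (maxs_le PB (esym E)) (maxs_le PA E).
apply/fsetP => x; apply/idP/idP; first exact: (mideal_subset eM E).
exact: (mideal_subset (esym eM) (esym E)).
Qed.

End MonomialIdeals.

Theorem proposition5p13 :
  (* Part 1 *)
  ( mprime Pfin psum [fset 0] [fset 1] /\
    mcancellative Pfin psum [fset 1] /\
    (* F = { k.{1} : k in N_0 } is free abelian on {1} *)
    (forall k1 k2 : nat, pone_pow k1 = pone_pow k2 -> k1 = k2) /\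
    (* P_fin(N_0) = F x P_fin,0(N_0) *)
    (forall A : {fset nat}, Pfin A ->
       exists! kB : nat * {fset nat}, Pfin0 kB.2 /\ A = psum (pone_pow kB.1) kB.2) /\
    fully_elastic Pfin psum [fset 0] ) /\
  (* Part 2 *)
  ( forall (D : idomainType) (n : nat), (2 <= n)%N ->
      mBF (@nz_ideal {mpoly D[n]}) (@ideal_mul {mpoly D[n]}) (@full_ideal {mpoly D[n]}) ->
      exists f : {fset nat} -> ({mpoly D[n]} -> Prop),
        (forall A, Pfin A -> nz_ideal (f A)) /\
        f [fset 0] = @full_ideal {mpoly D[n]} /\
        (forall A B, Pfin A -> Pfin B -> f (psum A B) = ideal_mul (f A) (f B)) /\
        (forall A B, Pfin A -> Pfin B -> f A = f B -> A = B) ).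
Proof.
split.
  split; first exact: prime1.
  split; first by move=> B C _ _; exact: psum1_inj.
  split; first exact: pone_pow_inj.
  by split; [exact: unique_decomposition | exact: fully_elastic_Pfin].
move=> D n n2 _; exists (@mideal D n); split; first exact: mideal_nz.
split; first exact: mideal0.
by split; [exact: mideal_psum | exact: mideal_inj].
Qed.
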